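(* Let $\gamma\in\,]0,+\infty[$ and let $h\colon\mathbb{R}\to\mathbb{R}\colon v\mapsto\log(1+\exp(-v))$. Then for every $v\in\mathbb{R}$, $$\mathrm{prox}_{\gamma h}(v)=v+\mathrm{W}_{\exp(-v)}\big(\gamma\exp(-v)\big).$$
   Context: For a convex function $\psi\colon\mathbb{R}\to\mathbb{R}$, $\mathrm{prox}_\psi(v)$ is the unique minimizer over $p\in\mathbb{R}$ of $\frac12(p-v)^2+\psi(p)$. Generalized Lambert W function: for $r\in\,]0,+\infty[$ and $x\in\,]0,+\infty[$, $\mathrm{W}_r(x)$ denotes the unique real number $\bar v$ such that $\bar v(\exp(\bar v)+r)=x$ (this solution is positive; it is the branch of the generalized Lambert function taking nonnegative values, which is strictly increasing). *)

From Stdlib Require Import Reals Lra ClassicalEpsilon.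
Open Scope R_scope.

(* p is the proximal point of psi at v: p minimizes q |-> 1/2 (q - v)^2 + psi q.
   prox_psi(v) is defined in the paper as the unique such minimizer. *)
Definition is_prox (psi : R -> R) (v p : R) : Prop :=
  forall q : R, / 2 * (p - v) ^ 2 + psi p <= / 2 * (q - v) ^ 2 + psi q.

(* Generalized Lambert W function: W_r(x) is the (unique, for r > 0, x > 0)
   real number w such that w (exp w + r) = x. *)
Definition genW (r x : R) : R :=
  epsilon (inhabits 0) (fun w : R => w * (exp w + r) = x).

Definition h (v : R) : R := ln (1 + exp (- v)).

From Stdlib Require Import Reals Lra ClassicalEpsilon.
From Coquelicot Require Import Coquelicot.
Open Scope R_scope.

(* The prox objective [q |-> (q - v)^2 / 2 + gamma h q] is differentiable with
   strictly increasing derivative [q - v - gamma / (1 + exp q)], so its unique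
   minimizer is its unique critical point.  Writing the critical point as
   [v + w], the equation [w = gamma / (1 + exp (v + w))] multiplied by
   [exp (- v) (1 + exp (v + w))] is exactly [w (exp w + exp (- v)) = gamma exp (- v)],
   the defining equation of the generalized Lambert W value. *)

Lemma genW_eq (r x : R) : 0 < r -> 0 < x -> genW r x * (exp (genW r x) + r) = x.
Proof.
  intros Hr Hx. unfold genW. apply epsilon_spec.
  set (g := fun w => w * (exp w + r) - x).
  assert (Hg : continuity g) by (unfold g; apply derivable_continuous; reg).
  destruct (IVT g 0 x Hg Hx) as [w [_ Hw]].
  - unfold g. rewrite exp_0. lra.
  - unfold g. assert (1 < exp x) by (rewrite <- exp_0; apply exp_increasing; lra).
    nra.
  - exists w. unfold g in Hw. lra.
Qed.

Lemma strict_argmin_of_increasing_derivative (f f' : R -> R) (p0 : R) :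
  (forall c, derivable_pt_lim f c (f' c)) ->
  (forall a b, a < b -> f' a < f' b) ->
  f' p0 = 0 -> forall q, q <> p0 -> f p0 < f q.
Proof.
  intros Hder Hmono H0 q Hq.
  destruct (Rlt_or_le q p0) as [Hlt | Hle].
  - destruct (MVT_cor2 f f' q p0 Hlt (fun c _ => Hder c)) as [c [Hc Hcq]].
    assert (f' c < f' p0) by (apply Hmono; lra). nra.
  - destruct (MVT_cor2 f f' p0 q ltac:(lra) (fun c _ => Hder c)) as [c [Hc Hcq]].
    assert (f' p0 < f' c) by (apply Hmono; lra). nra.
Qed.

Lemma argmin_iff_eq_strict_argmin (f : R -> R) (p0 : R) :
  (forall q, q <> p0 -> f p0 < f q) ->
  forall p, (forall q, f p <= f q) <-> p = p0.
Proof.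
  intros Hstrict p. split.
  - intros Hp. destruct (Req_dec p p0) as [E | E]; [exact E |].
    specialize (Hstrict p E). specialize (Hp p0). lra.
  - intros -> q. destruct (Req_dec q p0) as [-> | E]; [lra |].
    apply Rlt_le, Hstrict, E.
Qed.

Lemma h_derivative (q : R) : derivable_pt_lim h q (- / (1 + exp q)).
Proof.
  apply is_derive_Reals. unfold h.
  pose proof (exp_pos q). pose proof (exp_pos (- q)).
  auto_derive; [lra |].
  rewrite exp_Ropp. field. lra.
Qed.

Lemma h_derivative_increasing (a b : R) : a < b -> - / (1 + exp a) < - / (1 + exp b).
Proof.
  intros Hab. pose proof (exp_pos a).
  assert (exp a < exp b) by (apply exp_increasing, Hab).
  apply Ropp_lt_contravar, Rinv_lt_contravar; nra.
Qed.

Lemma genW_fixed_point (gamma v : R) : 0 < gamma ->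
  let w := genW (exp (- v)) (gamma * exp (- v)) in w = gamma / (1 + exp (v + w)).
Proof.
  intros Hgamma w. set (r := exp (- v)) in w.
  assert (Hr : 0 < r) by apply exp_pos.
  assert (Hw : w * (exp w + r) = gamma * r) by (apply genW_eq; nra).
  assert (Hv : exp v = / r) by (unfold r; rewrite exp_Ropp, Rinv_inv; reflexivity).
  pose proof (exp_pos w).
  rewrite exp_plus, Hv.
  replace (1 + / r * exp w) with ((exp w + r) / r) by (field; lra).
  replace gamma with (w * (exp w + r) / r) by (rewrite Hw; field; lra).
  field. lra.
Qed.

Theorem proposition2 (gamma : R) (hgamma : 0 < gamma) (v : R) :
  forall p : R,
    is_prox (fun x => gamma * h x) v p <->
    p = v + genW (exp (- v)) (gamma * exp (- v)).
Proof.
  set (w := genW (exp (- v)) (gamma * exp (- v))).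
  set (F' := fun q => q - v + gamma * - / (1 + exp q)).
  assert (Hcrit : F' (v + w) = 0).
  { assert (Hfix : w = gamma / (1 + exp (v + w))) by exact (genW_fixed_point gamma v hgamma).
    unfold F'. rewrite Hfix at 1. unfold Rdiv. ring. }
  set (F := fun q => / 2 * (q - v) ^ 2 + gamma * h q).
  intros p. change ((forall q, F p <= F q) <-> p = v + w).
  apply argmin_iff_eq_strict_argmin.
  apply (strict_argmin_of_increasing_derivative F F').
  - intros c. apply is_derive_Reals. unfold F, F'.
    apply (is_derive_plus (fun q => / 2 * (q - v) ^ 2) (fun q => gamma * h q)).
    + auto_derive; [exact I | field].
    + apply is_derive_scal, is_derive_Reals, h_derivative.
  - intros a b Hab. pose proof (h_derivative_increasing a b Hab). unfold F'. nra.
  - exact Hcrit.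
Qed.
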